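(* Let $S\subseteq\{0,1\}^\ell$ be a finite set of vectors such that for all $a,b,c,d\in S$ (not necessarily distinct) there is an index $h\in[\ell]$ with $a[h]=b[h]=c[h]=d[h]=1$ (i.e., $S$ has no orthogonal quadruple). Then the weighted directed graph $G=\rho(S)$ defined below satisfies $\mathrm{diam}(G)\le 4$.
   Context: $[\ell]=\{1,\dots,\ell\}$; for $x\in\{0,1\}^\ell$, $x[i]$ is its $i$-th coordinate. A ''double-arc'' (edge) of weight $w$ between $x$ and $y$ means both arcs $x\to y$ and $y\to x$ of weight $w$. Distances $d_G(x,y)$ are shortest directed path lengths; $\mathrm{diam}(G)=\max_{x,y} d_G(x,y)$ over ordered pairs. Construction of $G=\rho(S)$. Vertex set: two special vertices $u,v$ and six disjoint sets (index triples $(i,j,k)\in[\ell]^3$ are ordered and may have repeated entries): - ABC $=\{(a,b,c)_{ABC}: a,b,c\in S\}$; DCB $=\{(d,c,b)_{DCB}: d,c,b\in S\}$. - AB $=\{(a,b,i,j,k)_{AB}: a,b\in S,\ a[i]=a[j]=a[k]=1,$ and $b$ equals 1 on at least two of the positions $i,j,k\}$; DC $=\{(d,c,i,j,k)_{DC}: d,c\in S,\ d[i]=d[j]=d[k]=1,$ and $c$ equals 1 on at least two of the positions $i,j,k\}$. - $AD_Y=\{(a,d,i,j,k)_Y: a,d\in S,\ a[i]=a[j]=a[k]=d[i]=d[j]=d[k]=1\}$; $AD_X=\{(a,d,i,j,k)_X: a,d\in S,$ at most one of $a[i],a[j],a[k],d[i],d[j],d[k]$ equals $0\}$. Arcs incident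 to $u,v$ (an arc to/from a set means to/from every vertex of that set): arcs $u\to$ABC of weight 0 and ABC$\to u$ of weight 4; $v\to$DCB of weight 4 and DCB$\to v$ of weight 0; $u\to$AB of weight 0 and AB$\to u$ of weight 3; DC$\to v$ of weight 0 and $v\to$DC of weight 3; double-arcs $u$–$v$ of weight 2, $u$–$AD_X$ and $v$–$AD_X$ of weight 1, $u$–$AD_Y$ and $v$–$AD_Y$ of weight 2, AB–$v$ of weight 2, DC–$u$ of weight 2. All other arcs are double-arcs of weight 1, present exactly in the following cases (only when both endpoints exist): - $(a,b,c)_{ABC}$–$(a,b,i,j,k)_{AB}$ if some $h\in\{i,j,k\}$ has $b[h]=c[h]=1$; - $(d,c,b)_{DCB}$–$(d,c,i,j,k)_{DC}$ if some $h\in\{i,j,k\}$ has $c[h]=b[h]=1$; - $(a,b,i,j,k)_{AB}$–$(a,b,i',j',k')_{AB}$ and $(d,c,i,j,k)_{DC}$–$(d,c,i',j',k')_{DC}$ for all index triples; - $(a,b,i,j,k)_{AB}$–$(a,d,i,j,k)_Y$ and $(a,d,i,j,k)_Y$–$(d,c,i,j,k)_{DC}$; - $(a,d,i,j,k)_X$–$(a,d',i,j,k)_Y$ for $d\neq d'$, and $(a,d,i,j,k)_X$–$(a',d,i,j,k)_Y$ for $a\neq a'$; - $(a,d,i,j,k)_X$–$(a,d,i',j',k')_Y$ for all index triples. No other arcs exist. *)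

From mathcomp Require Import all_boot.
Set Implicit Arguments. Unset Strict Implicit. Unset Printing Implicit Defensive.

Record wdigraph := WDigraph {
  gV : Type;
  gvert : gV -> Prop;
  garc : gV -> gV -> nat -> Prop
}.

Inductive walk (G : wdigraph) : gV G -> gV G -> nat -> Prop :=
| walk_nil (x : gV G) : walk x x 0
| walk_cons (x y z : gV G) (w n : nat) :
    @garc G x y w -> walk y z n -> walk x z (w + n).

Definition dist_le (G : wdigraph) (x y : gV G) (n : nat) : Prop :=
  exists m, m <= n /\ @walk G x y m.

Definition diam_le (G : wdigraph) (n : nat) : Prop :=
  forall x y, @gvert G x -> @gvert G y -> @dist_le G x y n.

Section Rho.
Variable l : nat.
Definition vec := {ffun 'I_l -> bool}.
Definition idx := ('I_l * 'I_l * 'I_l)%type.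

Inductive vtx :=
| Vu | Vv
| VABC of vec & vec & vec
| VDCB of vec & vec & vec
| VAB  of vec & vec & idx
| VDC  of vec & vec & idx
| VADY of vec & vec & idx
| VADX of vec & vec & idx.

Definition t1 (t : idx) : 'I_l := t.1.1.
Definition t2 (t : idx) : 'I_l := t.1.2.
Definition t3 (t : idx) : 'I_l := t.2.

Definition ones3 (x : vec) (t : idx) : bool := [&& x (t1 t), x (t2 t) & x (t3 t)].
(** x equals 1 on at least two of the positions t1,t2,t3 (counted as the
    three entries of the ordered triple) *)
Definition two_of3 (x : vec) (t : idx) : bool :=
  2 <= (x (t1 t) : nat) + x (t2 t) + x (t3 t).
Definition common3 (x y : vec) (t : idx) : bool :=
  [|| x (t1 t) && y (t1 t), x (t2 t) && y (t2 t) | x (t3 t) && y (t3 t)].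
(** at most one of a[i],a[j],a[k],d[i],d[j],d[k] equals 0 *)
Definition atmost_one_zero (a d : vec) (t : idx) : bool :=
  4 < (a (t1 t) : nat) + a (t2 t) + a (t3 t) + d (t1 t) + d (t2 t) + d (t3 t).

Variable S : {set vec}.

Definition rho_vert (x : vtx) : Prop :=
  match x with
  | Vu | Vv => True
  | VABC a b c => [/\ a \in S, b \in S & c \in S]
  | VDCB d c b => [/\ d \in S, c \in S & b \in S]
  | VAB a b t => [/\ a \in S, b \in S, ones3 a t & two_of3 b t]
  | VDC d c t => [/\ d \in S, c \in S, ones3 d t & two_of3 c t]
  | VADY a d t => [/\ a \in S, d \in S, ones3 a t & ones3 d t]
  | VADX a d t => [/\ a \in S, d \in S & atmost_one_zero a d t]
  end.

(** one-directional arcs (weights given explicitly) *)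
Inductive sarc : vtx -> vtx -> nat -> Prop :=
| s_u_ABC a b c : sarc Vu (VABC a b c) 0
| s_ABC_u a b c : sarc (VABC a b c) Vu 4
| s_v_DCB d c b : sarc Vv (VDCB d c b) 4
| s_DCB_v d c b : sarc (VDCB d c b) Vv 0
| s_u_AB a b t : sarc Vu (VAB a b t) 0
| s_AB_u a b t : sarc (VAB a b t) Vu 3
| s_DC_v d c t : sarc (VDC d c t) Vv 0
| s_v_DC d c t : sarc Vv (VDC d c t) 3.

(** double-arcs, listed in one orientation *)
Inductive darc : vtx -> vtx -> nat -> Prop :=
| d_u_v : darc Vu Vv 2
| d_u_X a d t : darc Vu (VADX a d t) 1
| d_v_X a d t : darc Vv (VADX a d t) 1
| d_u_Y a d t : darc Vu (VADY a d t) 2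
| d_v_Y a d t : darc Vv (VADY a d t) 2
| d_AB_v a b t : darc (VAB a b t) Vv 2
| d_DC_u d c t : darc (VDC d c t) Vu 2
| d_ABC_AB a b c t : common3 b c t -> darc (VABC a b c) (VAB a b t) 1
| d_DCB_DC d c b t : common3 c b t -> darc (VDCB d c b) (VDC d c t) 1
| d_AB_AB a b t t' : darc (VAB a b t) (VAB a b t') 1
| d_DC_DC d c t t' : darc (VDC d c t) (VDC d c t') 1
| d_AB_Y a b d t : darc (VAB a b t) (VADY a d t) 1
| d_Y_DC a d c t : darc (VADY a d t) (VDC d c t) 1
| d_X_Yd a d d' t : d != d' -> darc (VADX a d t) (VADY a d' t) 1
| d_X_Ya a a' d t : a != a' -> darc (VADX a d t) (VADY a' d t) 1
| d_X_Y a d t t' : darc (VADX a d t) (VADY a d t') 1.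

Definition rho_arc (x y : vtx) (w : nat) : Prop :=
  [/\ rho_vert x, rho_vert y & (sarc x y w \/ darc x y w \/ darc y x w)].

Definition rho : wdigraph := @WDigraph vtx rho_vert rho_arc.
End Rho.

(** Every vertex of rho(S) is close to the two hubs u and v: we compute, for
    each kind of vertex x, upper bounds on d(x,u), d(u,x), d(x,v), d(v,x)
    (only the arcs DCB -> DC -> u, u -> DC -> DCB and ABC -> AB -> v need the
    hypothesis, to find an index where the relevant vectors are all 1).
    For most ordered pairs (x,y) one of the routes x -> u -> y or x -> v -> y
    already has weight <= 4.  The six remaining kinds of pairs are
    Y -> DCB, ABC -> Y and {AB, ABC} -> {DC, DCB}.  The last four all use the
    "spine" AB(a,b,s) -> Y(a,d,s) -> DC(d,c,s) of weight 2, entered and left by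
    one arc each; the triple s is built from three indices supplied by the
    no-orthogonal-quadruple hypothesis.  The pairs Y -> DCB and ABC -> Y go
    through an X vertex instead. *)

From mathcomp Require Import all_boot.
Set Implicit Arguments. Unset Strict Implicit. Unset Printing Implicit Defensive.

Section Walks.
Variable G : wdigraph.
Implicit Types x y z : gV G.

Lemma walk_cat x y z m n : walk x y m -> walk y z n -> walk x z (m + n).
Proof.
elim=> {x y m} [x | x y' y w k arc_xy' _ IH] walk_yz; first by rewrite add0n.
by rewrite -addnA; apply: walk_cons arc_xy' (IH walk_yz).
Qed.

Lemma dist_le_refl x n : dist_le x x n.
Proof. by exists 0; split; [|apply: walk_nil]. Qed.

Lemma dist_le_trans x y z m n k :
  dist_le x y m -> dist_le y z n -> m + n <= k -> dist_le x z k.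
Proof.
move=> [m1 [le_m1 walk_xy]] [n1 [le_n1 walk_yz]] le_k.
exists (m1 + n1); split; last exact: walk_cat walk_xy walk_yz.
exact: leq_trans (leq_add le_m1 le_n1) le_k.
Qed.

Lemma dist_le_step x y z w n :
  garc x y w -> dist_le y z (n - w) -> w <= n -> dist_le x z n.
Proof.
move=> arc_xy dist_yz le_w.
have dist_xy : dist_le x y w.
  by exists (w + 0); split; [rewrite addn0 | apply: walk_cons arc_xy (walk_nil _)].
by apply: dist_le_trans dist_xy dist_yz _; rewrite subnKC.
Qed.

End Walks.

Section Triples.
Variables (l : nat) (x y : vec l) (h1 h2 h3 : 'I_l).

Lemma ones3_triple : x h1 -> x h2 -> x h3 -> ones3 x (h1, h2, h3).
Proof. by rewrite /ones3 /t1 /t2 /t3 /= => -> -> ->. Qed.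

Lemma two_of3_12 : x h1 -> x h2 -> two_of3 x (h1, h2, h3).
Proof. by rewrite /two_of3 /t1 /t2 /t3 /= => -> ->; case: (x h3). Qed.

Lemma two_of3_13 : x h1 -> x h3 -> two_of3 x (h1, h2, h3).
Proof. by rewrite /two_of3 /t1 /t2 /t3 /= => -> ->; case: (x h2). Qed.

Lemma two_of3_23 : x h2 -> x h3 -> two_of3 x (h1, h2, h3).
Proof. by rewrite /two_of3 /t1 /t2 /t3 /= => -> ->; case: (x h1). Qed.

Lemma common3_1 : x h1 -> y h1 -> common3 x y (h1, h2, h3).
Proof. by rewrite /common3 /t1 /t2 /t3 /= => -> ->. Qed.

Lemma common3_2 : x h2 -> y h2 -> common3 x y (h1, h2, h3).
Proof. by rewrite /common3 /t1 /t2 /t3 /= => -> ->; rewrite orbT. Qed.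

Lemma common3_3 : x h3 -> y h3 -> common3 x y (h1, h2, h3).
Proof. by rewrite /common3 /t1 /t2 /t3 /= => -> ->; rewrite !orbT. Qed.

End Triples.

(** Three ones plus at least two ones leave at most one zero among six
    entries: this is how X vertices are shown to exist. *)
Lemma atmost_one_zero_l l (a d : vec l) t :
  ones3 a t -> two_of3 d t -> atmost_one_zero a d t.
Proof.
case: t => [[i j] k]; rewrite /ones3 /two_of3 /atmost_one_zero /t1 /t2 /t3 /=.
by case/and3P=> -> -> ->; case: (d i); case: (d j); case: (d k).
Qed.

Lemma atmost_one_zero_r l (a d : vec l) t :
  two_of3 a t -> ones3 d t -> atmost_one_zero a d t.
Proof.
case: t => [[i j] k]; rewrite /ones3 /two_of3 /atmost_one_zero /t1 /t2 /t3 /=.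
by move=> two_a /and3P[-> -> ->]; move: two_a; case: (a i); case: (a j); case: (a k).
Qed.

Lemma darc_X_Y l (a d a' d' : vec l) s :
  a = a' \/ d = d' -> darc (VADX a d s) (VADY a' d' s) 1.
Proof.
case=> [<- | <-].
- by have [<- | ne_d] := eqVneq d d'; [apply: d_X_Y | apply: d_X_Yd].
- by have [<- | ne_a] := eqVneq a a'; [apply: d_X_Y | apply: d_X_Ya].
Qed.

Ltac triple_fact := first
  [ done
  | apply: ones3_triple; done
  | apply: two_of3_12; done | apply: two_of3_13; done | apply: two_of3_23; done
  | apply: common3_1; done | apply: common3_2; done | apply: common3_3; done
  | apply: atmost_one_zero_l; triple_fact
  | apply: atmost_one_zero_r; triple_fact ].
Ltac rho_vertex := rewrite /=; first [done | split; triple_fact].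
Ltac rho_arc_ok := split; [rho_vertex | rho_vertex | first
  [ left; constructor
  | right; left; constructor; triple_fact
  | right; right; constructor; triple_fact
  | right; left; apply: darc_X_Y; by [left | right]
  | right; right; apply: darc_X_Y; by [left | right] ]].

Tactic Notation "step" constr(y) constr(w) :=
  apply: (@dist_le_step (rho _) _ y _ w); [rho_arc_ok | | done].
Tactic Notation "arrive" := apply: dist_le_refl.

Definition no_orthogonal_quadruple l (S : {set vec l}) : Prop :=
  forall a b c d, a \in S -> b \in S -> c \in S -> d \in S ->
    exists h : 'I_l, [&& a h, b h, c h & d h].

Section Diameter.
Variables (l : nat) (S : {set vec l}).
Hypothesis noq : no_orthogonal_quadruple S.

Local Notation dist := (@dist_le (rho S)).
Local Notation u := (@Vu l).
Local Notation v := (@Vv l).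

Definition to_u (x : vtx l) : nat := match x with
 | Vu => 0 | Vv => 2 | VABC _ _ _ => 4 | VDCB _ _ _ => 3 | VAB _ _ _ => 3
 | VDC _ _ _ => 2 | VADY _ _ _ => 2 | VADX _ _ _ => 1 end.
Definition to_v (x : vtx l) : nat := match x with
 | Vu => 2 | Vv => 0 | VABC _ _ _ => 3 | VDCB _ _ _ => 0 | VAB _ _ _ => 2
 | VDC _ _ _ => 0 | VADY _ _ _ => 2 | VADX _ _ _ => 1 end.
Definition from_u (x : vtx l) : nat := match x with
 | Vu => 0 | Vv => 2 | VABC _ _ _ => 0 | VDCB _ _ _ => 3 | VAB _ _ _ => 0
 | VDC _ _ _ => 2 | VADY _ _ _ => 2 | VADX _ _ _ => 1 end.
Definition from_v (x : vtx l) : nat := match x with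
 | Vu => 2 | Vv => 0 | VABC _ _ _ => 2 | VDCB _ _ _ => 4 | VAB _ _ _ => 2
 | VDC _ _ _ => 3 | VADY _ _ _ => 2 | VADX _ _ _ => 1 end.

Lemma dist_to_u x : rho_vert S x -> dist x u (to_u x).
Proof.
case: x => [||a b c|d c b|a b t|d c t|a d t|a d t] /=.
- by move=> _; arrive.
- by move=> _; step u 2; arrive.
- by case=> *; step u 4; arrive.
- case=> Hd Hc Hb; have [h /and4P[dh ch bh _]] := noq Hd Hc Hb Hb.
  by step (VDC d c (h, h, h)) 1; step u 2; arrive.
- by case=> *; step u 3; arrive.
- by case=> *; step u 2; arrive.
- by case=> *; step u 2; arrive.
- by case=> *; step u 1; arrive.
Qed.

Lemma dist_to_v x : rho_vert S x -> dist x v (to_v x).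
Proof.
case: x => [||a b c|d c b|a b t|d c t|a d t|a d t] /=.
- by move=> _; step v 2; arrive.
- by move=> _; arrive.
- case=> Ha Hb Hc; have [h /and4P[ah bh ch _]] := noq Ha Hb Hc Hc.
  by step (VAB a b (h, h, h)) 1; step v 2; arrive.
- by case=> *; step v 0; arrive.
- by case=> *; step v 2; arrive.
- by case=> *; step v 0; arrive.
- by case=> *; step v 2; arrive.
- by case=> *; step v 1; arrive.
Qed.

Lemma dist_from_u y : rho_vert S y -> dist u y (from_u y).
Proof.
case: y => [||a b c|d c b|a b t|d c t|a d t|a d t] /=.
- by move=> _; arrive.
- by move=> _; step v 2; arrive.
- by case=> *; step (VABC a b c) 0; arrive.
- case=> Hd Hc Hb; have [h /and4P[dh ch bh _]] := noq Hd Hc Hb Hb.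
  by step (VDC d c (h, h, h)) 2; step (VDCB d c b) 1; arrive.
- by case=> *; step (VAB a b t) 0; arrive.
- by case=> *; step (VDC d c t) 2; arrive.
- by case=> *; step (VADY a d t) 2; arrive.
- by case=> *; step (VADX a d t) 1; arrive.
Qed.

Lemma dist_from_v y : rho_vert S y -> dist v y (from_v y).
Proof.
case: y => [||a b c|d c b|a b t|d c t|a d t|a d t] /=.
- by move=> _; step u 2; arrive.
- by move=> _; arrive.
- by case=> *; step u 2; step (VABC a b c) 0; arrive.
- by case=> *; step (VDCB d c b) 4; arrive.
- by case=> *; step (VAB a b t) 2; arrive.
- by case=> *; step (VDC d c t) 3; arrive.
- by case=> *; step (VADY a d t) 2; arrive.
- by case=> *; step (VADX a d t) 1; arrive.
Qed.

Lemma dist_via_hubs x y : rho_vert S x -> rho_vert S y ->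
  to_u x + from_u y <= 4 \/ to_v x + from_v y <= 4 -> dist x y 4.
Proof.
move=> Hx Hy [via_u | via_v].
- exact: dist_le_trans (dist_to_u Hx) (dist_from_u Hy) via_u.
- exact: dist_le_trans (dist_to_v Hx) (dist_from_v Hy) via_v.
Qed.

(** The vertices AB(a,b,s), Y(a,d,s), DC(d,c,s) of the spine exist. *)
Definition spine_triple (a b d c : vec l) (s : idx l) : bool :=
  [&& ones3 a s, ones3 d s, two_of3 b s & two_of3 c s].

(** The indices common to (a,b,d,c), (a,d,b,c0) and (a,d,c,b') form a
    spine triple through which the spine can moreover be entered from
    ABC(a,b,c0) and left towards DCB(d,c,b'). *)
Lemma spine_triple_exists a b d c c0 b' :
  a \in S -> b \in S -> d \in S -> c \in S -> c0 \in S -> b' \in S ->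
  exists2 s, spine_triple a b d c s & common3 b c0 s && common3 c b' s.
Proof.
move=> Ha Hb Hd Hc Hc0 Hb'.
have [h1 /and4P[ah1 bh1 dh1 ch1]] := noq Ha Hb Hd Hc.
have [h2 /and4P[ah2 dh2 bh2 c0h2]] := noq Ha Hd Hb Hc0.
have [h3 /and4P[ah3 dh3 ch3 b'h3]] := noq Ha Hd Hc Hb'.
by exists (h1, h2, h3); [apply/and4P; split | apply/andP; split]; triple_fact.
Qed.

Lemma dist_across_spine x y a b d c s :
  a \in S -> b \in S -> d \in S -> c \in S ->
  spine_triple a b d c s ->
  dist x (VAB a b s) 1 -> dist (VDC d c s) y 1 -> dist x y 4.
Proof.
move=> Ha Hb Hd Hc /and4P[a_s d_s b_s c_s] enter leave.
apply: dist_le_trans enter _ (leqnn _).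
by step (VADY a d s) 1; step (VDC d c s) 1; apply: leave.
Qed.

(** The four pairs from {AB, ABC} to {DC, DCB} all cross the spine; the
    entry arc into AB(a,b,s) and the exit arc out of DC(d,c,s) exist by the
    choice of s. *)
Lemma dist_AB_DC a b t d c t' :
  rho_vert S (VAB a b t) -> rho_vert S (VDC d c t') ->
  dist (VAB a b t) (VDC d c t') 4.
Proof.
case=> Ha Hb a_t b_t [Hd Hc d_t c_t].
have [s spine _] := spine_triple_exists Ha Hb Hd Hc Hb Hc.
have /and4P[a_s d_s b_s c_s] := spine.
apply: (dist_across_spine Ha Hb Hd Hc spine).
- by step (VAB a b s) 1; arrive.
- by step (VDC d c t') 1; arrive.
Qed.

Lemma dist_AB_DCB a b t d c b' :
  rho_vert S (VAB a b t) -> rho_vert S (VDCB d c b') ->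
  dist (VAB a b t) (VDCB d c b') 4.
Proof.
case=> Ha Hb a_t b_t [Hd Hc Hb'].
have [s spine /andP[_ c_b']] := spine_triple_exists Ha Hb Hd Hc Hb Hb'.
have /and4P[a_s d_s b_s c_s] := spine.
apply: (dist_across_spine Ha Hb Hd Hc spine).
- by step (VAB a b s) 1; arrive.
- by step (VDCB d c b') 1; arrive.
Qed.

Lemma dist_ABC_DC a b c0 d c t' :
  rho_vert S (VABC a b c0) -> rho_vert S (VDC d c t') ->
  dist (VABC a b c0) (VDC d c t') 4.
Proof.
case=> Ha Hb Hc0 [Hd Hc d_t c_t].
have [s spine /andP[b_c0 _]] := spine_triple_exists Ha Hb Hd Hc Hc0 Hc.
have /and4P[a_s d_s b_s c_s] := spine.
apply: (dist_across_spine Ha Hb Hd Hc spine).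
- by step (VAB a b s) 1; arrive.
- by step (VDC d c t') 1; arrive.
Qed.

Lemma dist_ABC_DCB a b c0 d c b' :
  rho_vert S (VABC a b c0) -> rho_vert S (VDCB d c b') ->
  dist (VABC a b c0) (VDCB d c b') 4.
Proof.
case=> Ha Hb Hc0 [Hd Hc Hb'].
have [s spine /andP[b_c0 c_b']] := spine_triple_exists Ha Hb Hd Hc Hc0 Hb'.
have /and4P[a_s d_s b_s c_s] := spine.
apply: (dist_across_spine Ha Hb Hd Hc spine).
- by step (VAB a b s) 1; arrive.
- by step (VDCB d c b') 1; arrive.
Qed.

(** Y(a,d,t) -> X(a,d,s) -> Y(a,d',s) -> DC(d',c,s) -> DCB(d',c,b), where the
    arc X -> Y exists both when d = d' and when d <> d'. *)
Lemma dist_Y_DCB a d t d' c b :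
  rho_vert S (VADY a d t) -> rho_vert S (VDCB d' c b) ->
  dist (VADY a d t) (VDCB d' c b) 4.
Proof.
case=> Ha Hd a_t d_t [Hd' Hc Hb].
have [h1 /and4P[ah1 d'h1 dh1 ch1]] := noq Ha Hd' Hd Hc.
have [h2 /and4P[ah2 d'h2 ch2 bh2]] := noq Ha Hd' Hc Hb.
step (VADX a d (h1, h1, h2)) 1; step (VADY a d' (h1, h1, h2)) 1.
by step (VDC d' c (h1, h1, h2)) 1; step (VDCB d' c b) 1; arrive.
Qed.

(** ABC(a,b,c0) -> AB(a,b,s) -> Y(a,d',s) -> X(a',d',s) -> Y(a',d',t'), where
    the arc Y -> X exists both when a = a' and when a <> a'. *)
Lemma dist_ABC_Y a b c0 a' d' t' :
  rho_vert S (VABC a b c0) -> rho_vert S (VADY a' d' t') ->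
  dist (VABC a b c0) (VADY a' d' t') 4.
Proof.
case=> Ha Hb Hc0 [Ha' Hd' a'_t d'_t].
have [h1 /and4P[ah1 bh1 d'h1 a'h1]] := noq Ha Hb Hd' Ha'.
have [h2 /and4P[ah2 bh2 c0h2 d'h2]] := noq Ha Hb Hc0 Hd'.
step (VAB a b (h1, h1, h2)) 1; step (VADY a d' (h1, h1, h2)) 1.
by step (VADX a' d' (h1, h1, h2)) 1; step (VADY a' d' t') 1; arrive.
Qed.

End Diameter.

Theorem mainTheorem2 (l : nat) (S : {set {ffun 'I_l -> bool}}) :
  (forall a b c d, a \in S -> b \in S -> c \in S -> d \in S ->
     exists h : 'I_l, [&& a h, b h, c h & d h]) ->
  diam_le (rho S) 4.
Proof.
move=> noq x y Hx Hy.
case: x y Hx Hy => [||a b c|d c b|a b t|d c t|a d t|a d t]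
  [||a' b' c'|d' c' b'|a' b' t'|d' c' t'|a' d' t'|a' d' t'] Hx Hy;
  first [ by apply: (dist_via_hubs noq Hx Hy); left
        | by apply: (dist_via_hubs noq Hx Hy); right
        | exact: dist_Y_DCB | exact: dist_AB_DC | exact: dist_AB_DCB
        | exact: dist_ABC_DC | exact: dist_ABC_Y | exact: dist_ABC_DCB ].
Qed.
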